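(* Let $K$ be a Kripke structure with states $s$ and $t$, and let $D(K)$ be its deadlock extension. Then $s\leftrightarrow_b^{\Delta}t$ within $K$ if and only if $s\leftrightarrow_b^{\Delta}t$ within $D(K)$.
   Context: Fix a set $\mathbf{AP}$ of atomic propositions. A Kripke structure is a triple $K=(S,L,\to)$ with $S$ a set of states, $L:S\to\mathcal{P}(\mathbf{AP})$ and $\to\subseteq S\times S$ (not required to be total); a deadlock state is a state without successors. A finite path from $s$ is a sequence $s_0,\dots,s_n$ with $s_0=s$ and $s_k\to s_{k+1}$ for $0\le k<n$; an infinite path is defined analogously. A colouring is a function $\mathcal{C}$ from the set of states into an arbitrary set of colours. For a path $\pi=s_0,s_1,\dots$, $\mathcal{C}(\pi)$ is obtained from $\mathcal{C}(s_0),\mathcal{C}(s_1),\dots$ by contracting every maximal (finite or infinite) block of consecutive equal colours to a single colour. The $\mathcal{C}(\pi)$ with $\pi$ a path from $s$ are the $\mathcal{C}$-coloured traces of $s$; $\mathcal{C}(\pi)$ is a divergent $\mathcal{C}$-coloured trace of $s$ if $\pi$ is an infinite path from $s$ and $\mathcal{C}(\pi)$ is finite. A colouring is consistent if any two states of the same colour have the same label and the same $\mathcal{C}$-coloured traces; a consistent colouring preserves divergence if any two states of the same colour have the same divergent $\mathcal{C}$-coloured traces. In a Kripke structure, $s\leftrightarrow_b^{\Delta}t$ iff there is a consistent, divergence preserving colouring $\mathcal{C}$ of its states with $\mathcal{C}(s)=\mathcal{C}(t)$. The deadlock extension $D(K)$ of $K$ is obtained from $K$ by adding a fresh state $s_\delta$,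 labelled $\{\delta\}$ for a fresh atomic proposition $\delta\notin\mathbf{AP}$, together with a transition $s_\delta\to s_\delta$ and a transition $u\to s_\delta$ for every deadlock state $u$ of $K$. *)

From Stdlib Require Import List.
Set Implicit Arguments.

(* A Kripke structure over atomic propositions AP: states, labelling
   (a set of atomic propositions, as a predicate), transition relation
   (not required to be total). *)
Record kripke (AP : Type) := Kripke {
  st : Type;
  lab : st -> AP -> Prop;
  trans : st -> st -> Prop
}.
Arguments st {AP} k.
Arguments lab {AP} k _ _.
Arguments trans {AP} k _ _.

(* Index domains: [Some n] = {0,...,n} (finite path s_0..s_n),
   [None] = all of nat (infinite path). *)
Definition in_dom (d : option nat) (k : nat) : Prop :=
  match d with Some n => k <= n | None => True end.

Definition is_path {AP} (K : kripke AP) (d : option nat) (p : nat -> st K) : Prop :=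
  forall k, in_dom d (S k) -> trans K (p k) (p (S k)).

Inductive trace (Col : Type) : Type :=
| TFin : list Col -> trace Col
| TInf : (nat -> Col) -> trace Col.
Arguments TFin {Col} _.
Arguments TInf {Col} _.

Definition tr_at {Col} (tr : trace Col) (j : nat) (x : Col) : Prop :=
  match tr with
  | TFin l => nth_error l j = Some x
  | TInf h => h j = x
  end.

Definition tr_dom {Col} (tr : trace Col) (j : nat) : Prop :=
  match tr with
  | TFin l => j < length l
  | TInf _ => True
  end.

(* [contraction d g tr]: tr is obtained from the colour sequence g
   (on domain d) by contracting every maximal block of consecutive equal
   colours to a single colour. *)
Definition contraction {Col} (d : option nat) (g : nat -> Col) (tr : trace Col) : Prop :=
  exists b : nat -> nat,
    b 0 = 0 /\
    (forall k, in_dom d (S k) -> b (S k) = b k \/ b (S k) = S (b k)) /\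
    (forall k, in_dom d k -> tr_at tr (b k) (g k)) /\
    (forall j, tr_dom tr j -> exists k, in_dom d k /\ b k = j) /\
    (forall j x y, tr_at tr j x -> tr_at tr (S j) y -> x <> y).

Definition ctrace {AP} (K : kripke AP) {Col} (C : st K -> Col) (s : st K)
    (tr : trace Col) : Prop :=
  exists (d : option nat) (p : nat -> st K),
    p 0 = s /\ is_path K d p /\ contraction d (fun k => C (p k)) tr.

Definition div_ctrace {AP} (K : kripke AP) {Col} (C : st K -> Col) (s : st K)
    (tr : trace Col) : Prop :=
  exists p : nat -> st K,
    p 0 = s /\ is_path K None p /\ contraction None (fun k => C (p k)) tr /\
    exists l, tr = TFin l.

Definition consistent {AP} (K : kripke AP) {Col} (C : st K -> Col) : Prop :=
  forall s t, C s = C t ->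
    (forall a, lab K s a <-> lab K t a) /\
    (forall tr, ctrace K C s tr <-> ctrace K C t tr).

Definition div_preserving {AP} (K : kripke AP) {Col} (C : st K -> Col) : Prop :=
  forall s t, C s = C t ->
    forall tr, div_ctrace K C s tr <-> div_ctrace K C t tr.

Definition bbisim_div {AP} (K : kripke AP) (s t : st K) : Prop :=
  exists (Col : Type) (C : st K -> Col),
    consistent K C /\ div_preserving K C /\ C s = C t.

Definition deadlock {AP} (K : kripke AP) (u : st K) : Prop :=
  forall v, ~ trans K u v.

(* Deadlock extension D(K): states option (st K), None = s_delta;
   atomic propositions option AP, None = the fresh proposition delta. *)
Definition dext_lab {AP} (K : kripke AP) (x : option (st K)) (a : option AP) : Prop :=
  match x, a with
  | Some s, Some a' => lab K s a'
  | Some _, None => False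
  | None, None => True
  | None, Some _ => False
  end.

Definition dext_trans {AP} (K : kripke AP) (x y : option (st K)) : Prop :=
  match x, y with
  | Some u, Some v => trans K u v
  | Some u, None => deadlock K u
  | None, None => True
  | None, Some _ => False
  end.

Definition Dext {AP} (K : kripke AP) : kripke (option AP) :=
  @Kripke (option AP) (option (st K)) (dext_lab K) (dext_trans K).

From Stdlib Require Import List Lia Arith Wf_nat Classical ClassicalEpsilon FunctionalExtensionality.
Import ListNotations.
Set Implicit Arguments.

(* A colouring [C] of [K] extends to [D(K)] by giving [s_delta] a colour of its own;
   conversely a colouring of [D(K)] restricts to [K], where the label [delta] keeps the
   colour of [s_delta] apart, so that a [D(K)]-path matching a trace of [K] never visits
   [s_delta].  The real work is in the forward direction: a [D(K)]-trace that enters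
   [s_delta] is the trace of a [K]-path ending in a deadlock, followed by [delta].  An
   equally coloured state has a [K]-path with the same trace; from the point where it
   enters the last block we need a deadlock reachable within the colour of that block.
   It exists because this is the colour of a deadlock [w]: leaving the colour would give
   [w] a two-block trace, and staying in it forever would give [w] a divergent trace. *)

(** * Contractions of colour sequences *)

Definition contraction_by {Col} (d : option nat) (g : nat -> Col) (tr : trace Col)
    (b : nat -> nat) : Prop :=
  b 0 = 0 /\
  (forall k, in_dom d (S k) -> b (S k) = b k \/ b (S k) = S (b k)) /\
  (forall k, in_dom d k -> tr_at tr (b k) (g k)) /\
  (forall j, tr_dom tr j -> exists k, in_dom d k /\ b k = j) /\
  (forall j x y, tr_at tr j x -> tr_at tr (S j) y -> x <> y).

Lemma in_dom_0 d : in_dom d 0.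
Proof. destruct d; simpl; lia. Qed.

Lemma in_dom_le d k k' : in_dom d k -> k' <= k -> in_dom d k'.
Proof. destruct d; simpl; lia. Qed.

Lemma tr_at_functional {Col} (tr : trace Col) j x y : tr_at tr j x -> tr_at tr j y -> x = y.
Proof. destruct tr; simpl; congruence. Qed.

Lemma tr_at_dom {Col} (tr : trace Col) j x : tr_at tr j x -> tr_dom tr j.
Proof. destruct tr; simpl; auto. intros H. apply nth_error_Some. congruence. Qed.

Section Contraction.
Context {Col : Type}.
Implicit Types (g : nat -> Col) (tr : trace Col) (l : list Col).

Lemma contraction_by_mono d g tr b k k' : contraction_by d g tr b ->
  in_dom d k -> k' <= k -> b k' <= b k.
Proof.
  intros (_ & Hs & _) Hk Hle. induction Hle as [|k Hle IH]; [lia|].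
  assert (in_dom d k) by (eapply in_dom_le; eauto).
  destruct (Hs k Hk); specialize (IH ltac:(assumption)); lia.
Qed.

Lemma contraction_by_ext d g g' tr b : contraction_by d g tr b ->
  (forall k, in_dom d k -> g k = g' k) -> contraction_by d g' tr b.
Proof.
  intros (H0 & Hs & Ha & Hsu & Hdi) He. repeat split; auto.
  intros k Hk. rewrite <- He by auto. auto.
Qed.

Lemma contraction_by_colour d g tr b j x : contraction_by d g tr b ->
  tr_at tr j x -> exists k, in_dom d k /\ g k = x.
Proof.
  intros (_ & _ & Ha & Hsu & _) Hx.
  destruct (Hsu j (tr_at_dom _ _ _ Hx)) as [k [Hk <-]].
  exists k. split; auto. eapply tr_at_functional; eauto.
Qed.

Lemma contraction_by_step_eq d g tr b k : contraction_by d g tr b ->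
  in_dom d (S k) -> g (S k) = g k -> b (S k) = b k.
Proof.
  intros (_ & Hs & Ha & _ & Hdi) Hk Hg.
  destruct (Hs k Hk) as [|HbS]; auto. exfalso.
  apply (Hdi (b k) (g k) (g (S k))); auto.
  - apply Ha. eapply in_dom_le; eauto.
  - rewrite <- HbS. auto.
Qed.

Lemma contraction_by_step_neq d g tr b k : contraction_by d g tr b ->
  in_dom d (S k) -> g (S k) <> g k -> b (S k) = S (b k).
Proof.
  intros (_ & Hs & Ha & _) Hk Hg.
  destruct (Hs k Hk) as [HbS|]; auto. exfalso. apply Hg.
  eapply tr_at_functional; [apply Ha; auto|].
  rewrite HbS. apply Ha. eapply in_dom_le; eauto.
Qed.

Lemma contraction_by_const_tail d g tr b m : contraction_by d g tr b ->
  (forall k, m <= k -> in_dom d k -> g k = g m) ->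
  forall k, m <= k -> in_dom d k -> b k = b m.
Proof.
  intros Hc Hg k Hle. induction Hle as [|k Hle IH]; auto. intros Hk.
  assert (in_dom d k) by (eapply in_dom_le; eauto).
  rewrite (contraction_by_step_eq k Hc Hk); [auto|].
  rewrite !Hg; auto. symmetry; auto.
Qed.

Lemma contraction_by_hit d g tr b n j : contraction_by d g tr b ->
  in_dom d n -> j <= b n -> exists k, k <= n /\ b k = j.
Proof.
  intros Hc. pose proof Hc as (H0 & Hs & _). revert j.
  induction n as [|n IH]; intros j Hn Hj.
  - exists 0. lia.
  - destruct (le_lt_dec j (b n)) as [Hle|Hlt].
    + destruct (IH j (in_dom_le _ Hn (Nat.le_succ_diag_r n)) Hle) as [k [? ?]].
      exists k; split; auto; lia.
    + exists (S n). destruct (Hs n Hn); lia.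
Qed.

Lemma contraction_by_length n g l b : contraction_by (Some n) g (TFin l) b ->
  length l = S (b n).
Proof.
  intros Hc. pose proof Hc as (_ & _ & Ha & Hsu & _).
  assert (b n < length l).
  { apply nth_error_Some. specialize (Ha n (le_n n)). simpl in Ha. congruence. }
  destruct (Hsu (length l - 1)) as [k [Hk Hb]]; simpl; [lia|].
  pose proof (contraction_by_mono Hc (le_n n) Hk). lia.
Qed.

Lemma contraction_by_last n g l b : contraction_by (Some n) g (TFin l) b ->
  nth_error l (length l - 1) = Some (g n).
Proof.
  intros Hc. rewrite (contraction_by_length Hc).
  replace (S (b n) - 1) with (b n) by lia. apply Hc. simpl. lia.
Qed.

Lemma contraction_by_truncate d g l l' b n : contraction_by d g (TFin (l ++ l')) b ->
  in_dom d n -> length l = S (b n) -> contraction_by (Some n) g (TFin l) b.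
Proof.
  intros Hc Hn Hl. pose proof Hc as (H0 & Hs & Ha & _ & Hdi).
  repeat split; auto.
  - intros k Hk. apply Hs. eapply in_dom_le; eauto.
  - intros k Hk. simpl in Hk |- *.
    pose proof (contraction_by_mono Hc Hn Hk).
    rewrite <- (nth_error_app1 l l') by lia. apply Ha. eapply in_dom_le; eauto.
  - intros j Hj. simpl in Hj.
    destruct (contraction_by_hit n (j := j) Hc Hn ltac:(lia)) as [k [? ?]]. exists k. auto.
  - intros j x y Hx Hy. unfold tr_at in Hx, Hy.
    assert (S j < length l) by (apply nth_error_Some; congruence).
    apply (Hdi j); unfold tr_at; rewrite nth_error_app1; auto; lia.
Qed.

Lemma contraction_by_const d g c : (forall k, in_dom d k -> g k = c) ->
  contraction_by d g (TFin [c]) (fun _ => 0).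
Proof.
  intros He. repeat split.
  - auto.
  - intros k Hk. simpl. rewrite He; auto.
  - intros j Hj. simpl in Hj. exists 0. split; [apply in_dom_0|lia].
  - intros [|[|j]] x y _ Hy; discriminate.
Qed.

Lemma contraction_by_extend n d g tr b : contraction_by (Some n) g tr b -> in_dom d n ->
  (forall k, n <= k -> in_dom d k -> g k = g n) ->
  contraction_by d g tr (fun k => if k <=? n then b k else b n).
Proof.
  intros (H0 & Hs & Ha & Hsu & Hdi) Hn He. repeat split; auto.
  - intros k Hk. destruct (Nat.leb_spec (S k) n); destruct (Nat.leb_spec k n);
      try lia; [apply Hs; simpl; lia|replace k with n by lia; auto].
  - intros k Hk. destruct (Nat.leb_spec k n).
    + apply Ha. simpl. auto.
    + rewrite He by (auto; lia). apply Ha. simpl; auto.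
  - intros j Hj. destruct (Hsu j Hj) as [k [Hk Hb]]. simpl in Hk. exists k.
    split; [eapply in_dom_le; eauto|].
    destruct (Nat.leb_spec k n); [auto|lia].
Qed.

Lemma contraction_by_snoc n g l b z : contraction_by (Some n) g (TFin l) b ->
  g (S n) = z -> g n <> z ->
  contraction_by (Some (S n)) g (TFin (l ++ [z])) (fun k => if k <=? n then b k else S (b n)).
Proof.
  intros Hc Hz Hne. pose proof (contraction_by_length Hc) as Hl.
  pose proof Hc as (H0 & Hs & Ha & Hsu & Hdi).
  repeat split; auto.
  - intros k Hk. simpl in Hk.
    destruct (Nat.leb_spec (S k) n); destruct (Nat.leb_spec k n); try lia;
      [apply Hs; simpl; lia|replace k with n by lia; auto].
  - intros k Hk. simpl in Hk |- *. destruct (Nat.leb_spec k n) as [Hkn|].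
    + pose proof (contraction_by_mono Hc (le_n n) Hkn).
      rewrite nth_error_app1 by lia. apply (Ha k Hkn).
    + replace k with (S n) by lia.
      rewrite nth_error_app2 by lia. rewrite <- Hl, Nat.sub_diag. simpl. congruence.
  - intros j Hj. simpl in Hj. rewrite length_app in Hj. simpl in Hj.
    destruct (Nat.eq_dec j (length l)) as [->|Hjl].
    + exists (S n). split; [simpl; lia|].
      destruct (Nat.leb_spec (S n) n); lia.
    + destruct (Hsu j ltac:(simpl; lia)) as [k [Hk Hb]]. simpl in Hk.
      exists k. split; [simpl; lia|]. destruct (Nat.leb_spec k n); [auto|lia].
  - intros j x y Hx Hy. unfold tr_at in Hx, Hy.
    assert (Hj : S j < length (l ++ [z])) by (apply nth_error_Some; congruence).
    rewrite length_app in Hj. simpl in Hj.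
    rewrite nth_error_app1 in Hx by lia.
    destruct (Nat.eq_dec (S j) (length l)) as [Hjl|].
    + rewrite nth_error_app2, Hjl, Nat.sub_diag in Hy by lia. simpl in Hy.
      replace j with (b n) in Hx by lia.
      specialize (Ha n (le_n n)). simpl in Ha. congruence.
    + rewrite nth_error_app1 in Hy by lia. eapply Hdi; eauto.
Qed.

Lemma contraction_by_unsnoc d g tr b n z : contraction_by d g tr b -> in_dom d (S n) ->
  g n <> z -> (forall k, S n <= k -> in_dom d k -> g k = z) ->
  exists l, tr = TFin (l ++ [z]) /\ contraction_by (Some n) g (TFin l) b.
Proof.
  intros Hc Hn Hne Hz. pose proof Hc as (_ & _ & Ha & Hsu & _).
  assert (Hn' : in_dom d n) by (eapply in_dom_le; eauto).
  assert (HbS : b (S n) = S (b n)).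
  { apply (contraction_by_step_neq n Hc Hn). rewrite Hz; auto. }
  assert (Htail : forall k, S n <= k -> in_dom d k -> b k = S (b n)).
  { intros k Hk Hkd. rewrite <- HbS. apply (contraction_by_const_tail Hc); auto.
    intros i Hi Hid. rewrite !Hz; auto. }
  assert (Hbound : forall j, tr_dom tr j -> j <= S (b n)).
  { intros j Hj. destruct (Hsu j Hj) as [k [Hk <-]].
    destruct (le_lt_dec k n).
    - pose proof (contraction_by_mono Hc Hn' l). lia.
    - rewrite Htail; auto. }
  assert (Hlast : tr_at tr (S (b n)) z).
  { rewrite <- HbS, <- (Hz (S n)); auto. }
  destruct tr as [L|f]; [|specialize (Hbound (S (S (b n))) I); lia].
  destruct (nth_error_split L _ Hlast) as [l [l' [-> Hl]]].
  destruct l' as [|y l'].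
  - exists l. split; auto. eapply contraction_by_truncate; eauto.
  - specialize (Hbound (S (S (b n)))). simpl in Hbound.
    rewrite length_app in Hbound. simpl in Hbound. lia.
Qed.

End Contraction.

(** * Mapping traces *)

Definition trace_map {A B} (h : A -> B) (tr : trace A) : trace B :=
  match tr with
  | TFin l => TFin (map h l)
  | TInf f => TInf (fun j => h (f j))
  end.

Lemma tr_at_trace_map {A B} (h : A -> B) tr j x :
  tr_at (trace_map h tr) j x <-> exists y, tr_at tr j y /\ x = h y.
Proof.
  destruct tr; simpl.
  - rewrite nth_error_map. destruct (nth_error l j); simpl; split.
    + intros E. injection E. eauto.
    + intros [y [E ->]]. congruence.
    + discriminate.
    + intros [y [E _]]. discriminate.
  - split; [intros <-; eauto|intros [y [-> ->]]; auto].
Qed.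

Lemma tr_dom_trace_map {A B} (h : A -> B) tr j : tr_dom (trace_map h tr) j <-> tr_dom tr j.
Proof. destruct tr; simpl; [rewrite length_map|]; tauto. Qed.

Lemma trace_map_Some_surj {A} (a : A) (tr : trace (option A)) :
  (forall j x, tr_at tr j x -> x <> None) -> exists tr0, tr = trace_map Some tr0.
Proof.
  set (h := fun o : option A => match o with Some x => x | None => a end).
  intros Hsome. exists (trace_map h tr).
  destruct tr as [l|f]; simpl; f_equal.
  - rewrite map_map, <- (map_id l) at 1. apply map_ext_in. intros o Ho.
    apply In_nth_error in Ho as [j Hj].
    destruct o; [auto|destruct (Hsome j None Hj); auto].
  - apply functional_extensionality. intros j.
    destruct (f j) eqn:E; [auto|destruct (Hsome j None E); auto].
Qed.

Lemma Some_inj {A} (x y : A) : Some x = Some y -> x = y.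
Proof. congruence. Qed.

Section ContractionMap.
Context {A B : Type} {h : A -> B} (h_inj : forall x y, h x = h y -> x = y).

Lemma contraction_by_map d g tr b : contraction_by d g tr b ->
  contraction_by d (fun k => h (g k)) (trace_map h tr) b.
Proof.
  intros (H0 & Hs & Ha & Hsu & Hdi). repeat split; auto.
  - intros k Hk. apply tr_at_trace_map. eauto.
  - intros j Hj. apply tr_dom_trace_map in Hj. auto.
  - intros j x y Hx Hy. apply tr_at_trace_map in Hx as [x' [Hx ->]].
    apply tr_at_trace_map in Hy as [y' [Hy ->]].
    intros E. apply (Hdi j x' y'); auto.
Qed.

Lemma contraction_by_unmap d g tr b :
  contraction_by d (fun k => h (g k)) (trace_map h tr) b -> contraction_by d g tr b.
Proof.
  intros (H0 & Hs & Ha & Hsu & Hdi). repeat split; auto.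
  - intros k Hk. destruct (proj1 (tr_at_trace_map _ _ _ _) (Ha k Hk)) as [y [Hy E]].
    apply h_inj in E. congruence.
  - intros j Hj. apply Hsu, tr_dom_trace_map, Hj.
  - intros j x y Hx Hy E. subst y. apply (Hdi j (h x) (h x)); auto;
      apply tr_at_trace_map; eauto.
Qed.

End ContractionMap.

(** * Paths and deadlocks *)

Section Paths.
Context {AP : Type} (K : kripke AP).

Lemma path_restrict d p n : is_path K d p -> in_dom d n -> is_path K (Some n) p.
Proof. intros Hp Hn k Hk. apply Hp. eapply in_dom_le; eauto. Qed.

Lemma path_concat m e p r : is_path K (Some m) p -> is_path K (Some e) r -> p m = r 0 ->
  is_path K (Some (m + e)) (fun i => if i <=? m then p i else r (i - m)).
Proof.
  intros Hp Hr Hpr i Hi. simpl in Hi.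
  destruct (Nat.leb_spec (S i) m); destruct (Nat.leb_spec i m); try lia.
  - apply Hp. simpl. lia.
  - replace i with m by lia. rewrite Hpr, Nat.sub_succ_l, Nat.sub_diag by lia.
    apply Hr. simpl. lia.
  - rewrite Nat.sub_succ_l by lia. apply Hr. simpl. lia.
Qed.

Lemma path_snoc e r y : is_path K (Some e) r -> trans K (r e) y ->
  is_path K (Some (S e)) (fun i => if i <=? e then r i else y).
Proof.
  intros Hr Hy i Hi. simpl in Hi.
  destruct (Nat.leb_spec (S i) e); destruct (Nat.leb_spec i e); try lia.
  - apply Hr. simpl. lia.
  - replace i with e by lia. exact Hy.
Qed.

Lemma serial_infinite_path (R : st K -> Prop) x0 : R x0 ->
  (forall x, R x -> exists y, trans K x y /\ R y) ->
  exists p, p 0 = x0 /\ is_path K None p /\ forall k, R (p k).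
Proof.
  intros Hx0 Hserial.
  assert (Hnext : forall x, exists y, R x -> trans K x y /\ R y).
  { intros x. destruct (classic (R x)) as [Hx|Hx].
    - destruct (Hserial x Hx) as [y Hy]. eauto.
    - exists x. tauto. }
  set (next := fun x => proj1_sig (constructive_indefinite_description _ (Hnext x))).
  assert (Hnext_spec : forall x, R x -> trans K x (next x) /\ R (next x))
    by (intros x; exact (proj2_sig (constructive_indefinite_description _ (Hnext x)))).
  set (p := fun k => Nat.iter k next x0).
  assert (HR : forall k, R (p k)) by (induction k; [exact Hx0|apply Hnext_spec, IHk]).
  exists p. split; [reflexivity|split; [|exact HR]].
  intros k _. apply Hnext_spec, HR.
Qed.

Lemma deadlock_path_dom w d p : deadlock K w -> p 0 = w -> is_path K d p -> d = Some 0.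
Proof.
  intros Hw H0 Hp.
  destruct d as [[|n]|]; [reflexivity| |]; exfalso; apply (Hw (p 1));
    rewrite <- H0; apply Hp; simpl; auto; lia.
Qed.

Section Colouring.
Context {Col : Type} (C : st K -> Col).

Lemma div_ctrace_ctrace s tr : div_ctrace K C s tr -> ctrace K C s tr.
Proof. intros [p [H0 [Hp [Hc _]]]]. exists None, p. auto. Qed.

Lemma deadlock_ctrace w tr : deadlock K w -> ctrace K C w tr -> tr = TFin [C w].
Proof.
  intros Hw [d [p [H0 [Hp [b Hb]]]]].
  rewrite (deadlock_path_dom Hw H0 Hp) in Hb.
  pose proof Hb as (Hb0 & _ & Ha & Hsu & _).
  destruct tr as [l|f].
  - pose proof (contraction_by_length Hb) as Hl.
    specialize (Ha 0 (le_n 0)). rewrite Hb0, H0 in Ha.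
    destruct l as [|x [|y l]]; simpl in Hl, Ha; try lia. congruence.
  - destruct (Hsu 1 I) as [k [Hk Hbk]]. simpl in Hk.
    replace k with 0 in Hbk by lia. congruence.
Qed.

Lemma ctrace_finite_path v l : ctrace K C v (TFin l) -> l <> [] ->
  exists k q, q 0 = v /\ is_path K (Some k) q /\ contraction (Some k) (fun i => C (q i)) (TFin l).
Proof.
  intros [d [q [Hq0 [Hq [b Hb]]]]] Hl.
  assert (Hlen : length l <> 0) by (destruct l; simpl; congruence).
  pose proof Hb as (_ & _ & _ & Hsu & _).
  destruct (Hsu (length l - 1)) as [k [Hk Hbk]]; [simpl; lia|].
  exists k, q. split; [auto|split; [eapply path_restrict; eauto|]].
  exists b. rewrite <- (app_nil_r l) in Hb.
  apply (contraction_by_truncate l [] k (g := fun i => C (q i)) Hb Hk). lia.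
Qed.

Definition reach_within (P : st K -> Prop) (x y : st K) : Prop :=
  exists e r, r 0 = x /\ is_path K (Some e) r /\ (forall i, i <= e -> P (r i)) /\ r e = y.

Lemma reach_within_refl (P : st K -> Prop) x : P x -> reach_within P x x.
Proof.
  intros Hx. exists 0, (fun _ => x). repeat split; auto.
  intros i Hi. simpl in Hi. lia.
Qed.

Lemma reach_within_step (P : st K -> Prop) x y z :
  reach_within P x y -> trans K y z -> P z -> reach_within P x z.
Proof.
  intros [e [r [Hr0 [Hr [HP <-]]]]] Hz HPz.
  exists (S e), (fun i => if i <=? e then r i else z).
  repeat split; [auto|apply path_snoc; auto| |].
  - intros i Hi. destruct (Nat.leb_spec i e); auto.
  - destruct (Nat.leb_spec (S e) e); [lia|auto].
Qed.

Lemma deadlock_colour_closed w x y y' : consistent K C -> deadlock K w ->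
  reach_within (fun u => C u = C w) x y -> trans K y y' -> C y' = C w.
Proof.
  intros Hc Hw [e [r [Hr0 [Hr [HP Hre]]]]] Hy. apply NNPP. intros Hne.
  set (r' := fun i => if i <=? e then r i else y').
  assert (Hr' : is_path K (Some (S e)) r') by (apply path_snoc; [exact Hr|rewrite Hre; exact Hy]).
  assert (Hr'e : forall i, i <= e -> r' i = r i)
    by (intros i Hi; unfold r'; destruct (Nat.leb_spec i e); [auto|lia]).
  assert (Hconst : contraction_by (Some e) (fun i => C (r' i)) (TFin [C w]) (fun _ => 0)).
  { apply contraction_by_const. intros i Hi. rewrite Hr'e by exact Hi. auto. }
  assert (Hr'S : r' (S e) = y')
    by (unfold r'; destruct (Nat.leb_spec (S e) e); [lia|auto]).
  assert (Hsnoc := contraction_by_snoc (z := C y') Hconst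
    ltac:(cbv beta; rewrite Hr'S; auto)
    ltac:(cbv beta; rewrite Hr'e, HP by lia; auto)).
  assert (Ht : ctrace K C x (TFin ([C w] ++ [C y']))).
  { exists (Some (S e)), r'.
    split; [rewrite Hr'e; auto; lia|split; [exact Hr'|eexists; exact Hsnoc]]. }
  apply (proj2 (Hc x w ltac:(rewrite <- Hr0; apply HP; lia))) in Ht.
  apply deadlock_ctrace in Ht; [discriminate|exact Hw].
Qed.

Lemma deadlock_reachable_within_colour w w1 : consistent K C -> div_preserving K C ->
  deadlock K w -> C w1 = C w ->
  exists x, reach_within (fun u => C u = C w) w1 x /\ deadlock K x.
Proof.
  intros Hc Hd Hw Hw1. apply NNPP. intros Hnone.
  set (R := reach_within (fun u => C u = C w) w1).
  assert (Hserial : forall x, R x -> exists y, trans K x y /\ R y).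
  { intros x Hx. apply NNPP. intros Hstuck. apply Hnone. exists x. split; [exact Hx|].
    intros y Hy. apply Hstuck. exists y. split; [exact Hy|].
    apply reach_within_step with x; auto. eapply deadlock_colour_closed; eauto. }
  destruct (serial_infinite_path R w1 (reach_within_refl _ _ Hw1) Hserial) as [p [Hp0 [Hp HR]]].
  assert (Hdiv : div_ctrace K C w1 (TFin [C w])).
  { exists p. split; [exact Hp0|split; [exact Hp|split; [|eexists; reflexivity]]].
    exists (fun _ => 0). apply contraction_by_const.
    intros k _. destruct (HR k) as [e [r [_ [_ [HP <-]]]]]. apply HP. lia. }
  apply (proj1 (Hd w1 w Hw1 _)) in Hdiv as [q [Hq0 [Hq _]]].
  apply (Hw (q 1)). rewrite <- Hq0. apply Hq. exact I.
Qed.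

Lemma deadlock_trace_transfer u v n p l : consistent K C -> div_preserving K C ->
  C u = C v -> p 0 = u -> is_path K (Some n) p -> deadlock K (p n) ->
  contraction (Some n) (fun k => C (p k)) (TFin l) ->
  exists N q, q 0 = v /\ is_path K (Some N) q /\ deadlock K (q N) /\
    contraction (Some N) (fun k => C (q k)) (TFin l).
Proof.
  intros Hc Hd Huv Hp0 Hp Hpn [b Hb].
  assert (Hl : l <> []) by (intros ->; pose proof (contraction_by_length Hb); discriminate).
  assert (Hv : ctrace K C v (TFin l))
    by (apply (proj2 (Hc u v Huv)); exists (Some n), p; split; [|split; [|exists b]]; auto).
  destruct (ctrace_finite_path Hv Hl) as [k [q [Hq0 [Hq [bq Hbq]]]]].
  assert (Hqk : C (q k) = C (p n)).
  { pose proof (contraction_by_last Hb). pose proof (contraction_by_last Hbq). congruence. }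
  destruct (deadlock_reachable_within_colour Hc Hd Hpn Hqk)
    as [x [[e [r [Hr0 [Hr [HP <-]]]]] Hx]].
  set (q' := fun i => if i <=? k then q i else r (i - k)).
  assert (Hq'q : forall i, i <= k -> q' i = q i)
    by (intros i Hi; unfold q'; destruct (Nat.leb_spec i k); [auto|lia]).
  assert (Hq'r : forall i, k <= i -> q' i = r (i - k)).
  { intros i Hi. unfold q'. destruct (Nat.leb_spec i k); [|auto].
    replace i with k by lia. rewrite Nat.sub_diag. auto. }
  exists (k + e), q'. split; [rewrite Hq'q; auto; lia|split; [|split]].
  - apply path_concat; auto.
  - rewrite Hq'r by lia. replace (k + e - k) with e by lia. exact Hx.
  - eexists. apply (contraction_by_extend (n := k)); [|simpl; lia|].
    + apply contraction_by_ext with (g := fun i => C (q i)); [exact Hbq|].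
      intros i Hi. rewrite Hq'q; auto.
    + intros i Hi Hid. simpl in Hid. rewrite Hq'r, HP, Hq'q, Hqk; auto; lia.
Qed.

End Colouring.
End Paths.

(** * The deadlock extension *)

Section DeadlockExtension.
Context {AP : Type} (K : kripke AP).

Lemma dext_path_some d p : is_path K d p -> is_path (Dext K) d (fun k => Some (p k)).
Proof. intros Hp k Hk. exact (Hp k Hk). Qed.

Lemma dext_path_in_K d p' : is_path (Dext K) d p' -> (forall k, in_dom d k -> p' k <> None) ->
  exists p, is_path K d p /\ forall k, in_dom d k -> p' k = Some (p k).
Proof.
  intros Hp' Hsome.
  destruct (p' 0) as [u|] eqn:Hu; [|destruct (Hsome 0 (in_dom_0 d) Hu)].
  set (p := fun k => match p' k with Some x => x | None => u end).
  assert (Hpp : forall k, in_dom d k -> p' k = Some (p k)).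
  { intros k Hk. unfold p. destruct (p' k) eqn:E; [auto|destruct (Hsome k Hk E)]. }
  exists p. split; [|exact Hpp].
  intros k Hk. pose proof (Hp' k Hk) as Ht.
  rewrite !Hpp in Ht by (auto; eapply in_dom_le; eauto). exact Ht.
Qed.

Lemma dext_delta_absorbing d p' m k : is_path (Dext K) d p' -> p' m = None ->
  m <= k -> in_dom d k -> p' k = None.
Proof.
  intros Hp' Hm Hle. induction Hle as [|k Hle IH]; [auto|]. intros Hk.
  pose proof (Hp' k Hk) as Ht. rewrite IH in Ht by (eapply in_dom_le; eauto).
  destruct (p' (S k)); [contradiction|reflexivity].
Qed.

Lemma dext_path_cases d p' : is_path (Dext K) d p' -> p' 0 <> None ->
  (forall k, in_dom d k -> p' k <> None) \/
  exists n, in_dom d (S n) /\ (forall k, k <= n -> p' k <> None) /\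
    (forall k, S n <= k -> in_dom d k -> p' k = None).
Proof.
  intros Hp' H0.
  destruct (classic (exists k, in_dom d k /\ p' k = None)) as [Hex|Hno].
  - right.
    destruct (dec_inh_nat_subset_has_unique_least_element _ (fun k => classic _) Hex)
      as [[|n] [[[Hm HmN] Hleast] _]]; [contradiction|].
    exists n. split; [exact Hm|split].
    + intros k Hk HkN. enough (S n <= k) by lia.
      apply Hleast. split; [eapply in_dom_le; eauto; lia|exact HkN].
    + intros k Hk Hkd. apply (dext_delta_absorbing Hp' HmN Hk Hkd).
  - left. intros k Hk HkN. apply Hno. eauto.
Qed.

Section Forward.
Context {Col : Type} (C : st K -> Col).

Lemma dext_ctrace_lift v tr : ctrace K C v tr ->
  ctrace (Dext K) (option_map C) (Some v) (trace_map Some tr).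
Proof.
  intros [d [q [Hq0 [Hq [b Hb]]]]].
  exists d, (fun k => Some (q k)). split; [congruence|split; [apply dext_path_some, Hq|]].
  exists b. exact (contraction_by_map (@Some_inj _) Hb).
Qed.

Lemma dext_div_ctrace_lift v tr : div_ctrace K C v tr ->
  div_ctrace (Dext K) (option_map C) (Some v) (trace_map Some tr).
Proof.
  intros [q [Hq0 [Hq [[b Hb] [l ->]]]]].
  exists (fun k => Some (q k)). split; [congruence|split; [apply dext_path_some, Hq|split]].
  - exists b. exact (contraction_by_map (@Some_inj _) Hb).
  - eexists. reflexivity.
Qed.

Lemma dext_trace_within_K d p p' tr :
  (forall k, in_dom d k -> p' k = Some (p k)) ->
  contraction d (fun k => option_map C (p' k)) tr ->
  exists tr0, contraction d (fun k => C (p k)) tr0 /\ tr = trace_map Some tr0.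
Proof.
  intros Hpp [b Hb].
  assert (Hb' : contraction_by d (fun k => Some (C (p k))) tr b).
  { apply contraction_by_ext with (g := fun k => option_map C (p' k)); [exact Hb|].
    intros k Hk. rewrite Hpp; auto. }
  destruct (trace_map_Some_surj (C (p 0)) tr) as [tr0 ->].
  { intros j x Hx. destruct (contraction_by_colour j x Hb' Hx) as [k [_ <-]]. discriminate. }
  exists tr0. split; [|reflexivity]. exists b.
  exact (contraction_by_unmap (@Some_inj _) _ _ Hb').
Qed.

Lemma dext_ctrace_cases d p' u tr : p' 0 = Some u -> is_path (Dext K) d p' ->
  contraction d (fun k => option_map C (p' k)) tr ->
  (exists p tr0, p 0 = u /\ is_path K d p /\ contraction d (fun k => C (p k)) tr0 /\
     tr = trace_map Some tr0) \/
  (exists n p l, p 0 = u /\ is_path K (Some n) p /\ deadlock K (p n) /\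
     contraction (Some n) (fun k => C (p k)) (TFin l) /\ tr = TFin (map Some l ++ [None])).
Proof.
  intros H0 Hp' Htr.
  destruct (dext_path_cases Hp' ltac:(congruence)) as [Hsome|[n [Hn [Hpre Hpost]]]].
  - left. destruct (dext_path_in_K Hp' Hsome) as [p [Hp Hpp]].
    destruct (dext_trace_within_K _ _ Hpp Htr) as [tr0 [Htr0 ->]].
    exists p, tr0. repeat split; auto.
    enough (Some (p 0) = Some u) by congruence. rewrite <- Hpp; [exact H0|apply in_dom_0].
  - right.
    assert (Hp'n : is_path (Dext K) (Some n) p')
      by (apply (path_restrict Hp'), (in_dom_le _ Hn); lia).
    destruct (dext_path_in_K Hp'n Hpre) as [p [Hp Hpp]].
    destruct Htr as [b Hb].
    destruct (contraction_by_unsnoc (z := None) Hb Hn) as [l' [-> Hl']].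
    + cbv beta. rewrite Hpp; simpl; [discriminate|lia].
    + intros k Hk Hkd. cbv beta. rewrite Hpost; auto.
    + destruct (dext_trace_within_K _ _ Hpp (ex_intro _ b Hl')) as [[l|f] [Hl Heq]];
        [|discriminate].
      injection Heq as ->.
      exists n, p, l. repeat split; auto.
      * enough (Some (p 0) = Some u) by congruence. rewrite <- Hpp; [exact H0|simpl; lia].
      * pose proof (Hp' n Hn) as Ht. rewrite Hpp, Hpost in Ht by (simpl; auto; lia). exact Ht.
Qed.

(* Once a deadlock is reached, the path of [D(K)] moves to [s_delta] and stays there. *)
Lemma dext_deadlock_div_ctrace v N q l : q 0 = v -> is_path K (Some N) q -> deadlock K (q N) ->
  contraction (Some N) (fun k => C (q k)) (TFin l) ->
  div_ctrace (Dext K) (option_map C) (Some v) (TFin (map Some l ++ [None])).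
Proof.
  intros Hq0 Hq HqN [b Hb].
  set (q' := fun k => if k <=? N then Some (q k) else None).
  assert (Hq'q : forall k, k <= N -> q' k = Some (q k))
    by (intros k Hk; unfold q'; destruct (Nat.leb_spec k N); [auto|lia]).
  assert (Hq'delta : forall k, N < k -> q' k = None)
    by (intros k Hk; unfold q'; destruct (Nat.leb_spec k N); [lia|auto]).
  assert (Hb' : contraction_by (Some N) (fun k => option_map C (q' k)) (TFin (map Some l)) b).
  { apply contraction_by_ext with (g := fun k => Some (C (q k))).
    - exact (contraction_by_map (@Some_inj _) Hb).
    - intros k Hk. rewrite Hq'q; auto. }
  assert (Hsnoc := contraction_by_snoc (z := None) Hb'
    ltac:(cbv beta; rewrite Hq'delta; auto) ltac:(cbv beta; rewrite Hq'q; [discriminate|auto])).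
  exists q'. split; [rewrite Hq'q; [congruence|lia]|split; [|split]].
  - intros k _. destruct (Nat.lt_ge_cases k N) as [|HkN].
    + rewrite !Hq'q by lia. apply Hq. simpl. lia.
    + rewrite (Hq'delta (S k)) by lia. destruct (Nat.eq_dec k N) as [->|].
      * rewrite Hq'q by lia. exact HqN.
      * rewrite Hq'delta by lia. exact I.
  - eexists. apply (contraction_by_extend None Hsnoc I).
    intros k Hk _. cbv beta. rewrite !Hq'delta by lia. reflexivity.
  - eexists. reflexivity.
Qed.

Section Transfer.
Hypotheses (Hc : consistent K C) (Hd : div_preserving K C).

Lemma dext_ctrace_transfer u v tr : C u = C v ->
  ctrace (Dext K) (option_map C) (Some u) tr -> ctrace (Dext K) (option_map C) (Some v) tr.
Proof.
  intros Huv [d [p' [H0 [Hp' Htr]]]].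
  destruct (dext_ctrace_cases H0 Hp' Htr)
    as [[p [tr0 [Hp0 [Hp [Htr0 ->]]]]]|[n [p [l [Hp0 [Hp [Hpn [Hl ->]]]]]]]].
  - apply dext_ctrace_lift, (Hc Huv). exists d, p. auto.
  - destruct (deadlock_trace_transfer v Hc Hd Huv Hp0 Hp Hpn Hl)
      as [N [q [Hq0 [Hq [HqN Hql]]]]].
    apply div_ctrace_ctrace. exact (dext_deadlock_div_ctrace Hq0 Hq HqN Hql).
Qed.

Lemma dext_div_ctrace_transfer u v tr : C u = C v ->
  div_ctrace (Dext K) (option_map C) (Some u) tr -> div_ctrace (Dext K) (option_map C) (Some v) tr.
Proof.
  intros Huv [p' [H0 [Hp' [Htr [l' Hl']]]]].
  destruct (dext_ctrace_cases H0 Hp' Htr)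
    as [[p [tr0 [Hp0 [Hp [Htr0 ->]]]]]|[n [p [l [Hp0 [Hp [Hpn [Hl ->]]]]]]]].
  - apply dext_div_ctrace_lift, (Hd Huv). exists p. repeat split; auto.
    destruct tr0 as [l|f]; [eauto|discriminate].
  - destruct (deadlock_trace_transfer v Hc Hd Huv Hp0 Hp Hpn Hl)
      as [N [q [Hq0 [Hq [HqN Hql]]]]].
    exact (dext_deadlock_div_ctrace Hq0 Hq HqN Hql).
Qed.

Lemma dext_consistent : consistent (Dext K) (option_map C).
Proof.
  intros [u|] [v|] Huv; try discriminate; [|split; tauto].
  injection Huv as Huv. split.
  - intros [a|]; simpl; [apply (Hc Huv)|tauto].
  - intros tr. split; apply dext_ctrace_transfer; auto.
Qed.

Lemma dext_div_preserving : div_preserving (Dext K) (option_map C).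
Proof.
  intros [u|] [v|] Huv; try discriminate; [|tauto].
  injection Huv as Huv. intros tr. split; apply dext_div_ctrace_transfer; auto.
Qed.

End Transfer.

End Forward.

Section Backward.
Context {Col : Type} (C : option (st K) -> Col) (Hc : consistent (Dext K) C).

Lemma dext_delta_colour x : C None <> C (Some x).
Proof. intros E. destruct (Hc E) as [Hlab _]. specialize (Hlab None). simpl in Hlab. tauto. Qed.

Lemma dext_trace_avoiding_delta d p' v tr b : p' 0 = Some v -> is_path (Dext K) d p' ->
  contraction_by d (fun k => C (p' k)) tr b ->
  (forall j x, tr_at tr j x -> exists y, x = C (Some y)) ->
  exists q, q 0 = v /\ is_path K d q /\ contraction_by d (fun k => C (Some (q k))) tr b.
Proof.
  intros H0 Hp' Hb Hcol.
  assert (Hsome : forall k, in_dom d k -> p' k <> None).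
  { intros k Hk Hdelta. pose proof Hb as (_ & _ & Ha & _).
    specialize (Ha k Hk). cbv beta in Ha. rewrite Hdelta in Ha.
    destruct (Hcol _ _ Ha) as [y Hy]. exact (dext_delta_colour Hy). }
  destruct (dext_path_in_K Hp' Hsome) as [q [Hq Hqq]].
  exists q. split; [|split; [exact Hq|]].
  - enough (Some (q 0) = Some v) by congruence. rewrite <- Hqq; [exact H0|apply in_dom_0].
  - apply contraction_by_ext with (g := fun k => C (p' k)); [exact Hb|].
    intros k Hk. rewrite Hqq; auto.
Qed.

Lemma restrict_ctrace_transfer u v tr : C (Some u) = C (Some v) ->
  ctrace K (fun x => C (Some x)) u tr -> ctrace K (fun x => C (Some x)) v tr.
Proof.
  intros Huv [d [p [Hp0 [Hp [b Hb]]]]].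
  assert (Hu : ctrace (Dext K) C (Some u) tr).
  { exists d, (fun k => Some (p k)).
    split; [congruence|split; [apply dext_path_some, Hp|exists b; exact Hb]]. }
  apply (Hc Huv) in Hu as [d' [p' [H0 [Hp' [b' Hb']]]]].
  destruct (dext_trace_avoiding_delta H0 Hp' Hb') as [q [Hq0 [Hq Hqb]]].
  - intros j x Hx. destruct (contraction_by_colour j x Hb Hx) as [k [_ <-]]. eauto.
  - exists d', q. split; [auto|split; [auto|exists b'; exact Hqb]].
Qed.

Lemma restrict_div_ctrace_transfer u v tr : div_preserving (Dext K) C ->
  C (Some u) = C (Some v) ->
  div_ctrace K (fun x => C (Some x)) u tr -> div_ctrace K (fun x => C (Some x)) v tr.
Proof.
  intros Hd Huv [p [Hp0 [Hp [[b Hb] Hfin]]]].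
  assert (Hu : div_ctrace (Dext K) C (Some u) tr).
  { exists (fun k => Some (p k)).
    split; [congruence|split; [apply dext_path_some, Hp|split; [exists b; exact Hb|exact Hfin]]]. }
  apply (Hd _ _ Huv) in Hu as [p' [H0 [Hp' [[b' Hb'] _]]]].
  destruct (dext_trace_avoiding_delta H0 Hp' Hb') as [q [Hq0 [Hq Hqb]]].
  - intros j x Hx. destruct (contraction_by_colour j x Hb Hx) as [k [_ <-]]. eauto.
  - exists q. split; [auto|split; [auto|split; [exists b'; exact Hqb|exact Hfin]]].
Qed.

Lemma restrict_consistent : consistent K (fun x => C (Some x)).
Proof.
  intros u v Huv. split.
  - intros a. exact (proj1 (Hc Huv) (Some a)).
  - intros tr. split; apply restrict_ctrace_transfer; auto.
Qed.

Lemma restrict_div_preserving : div_preserving (Dext K) C ->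
  div_preserving K (fun x => C (Some x)).
Proof. intros Hd u v Huv tr. split; apply restrict_div_ctrace_transfer; auto. Qed.

End Backward.
End DeadlockExtension.

Theorem theorem8p2 (AP : Type) (K : kripke AP) (s t : st K) :
  bbisim_div K s t <-> bbisim_div (Dext K) (Some s) (Some t).
Proof.
  split.
  - intros [Col [C [Hc [Hd Hst]]]]. exists (option Col), (option_map C).
    split; [exact (dext_consistent Hc Hd)|split; [exact (dext_div_preserving Hc Hd)|]].
    simpl. congruence.
  - intros [Col [C [Hc [Hd Hst]]]]. exists Col, (fun x => C (Some x)).
    split; [exact (restrict_consistent Hc)|split; [exact (restrict_div_preserving Hc Hd)|]].
    exact Hst.
Qed.
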